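(* In the symmetric-erasure retransmission model described in the context, for every realization of the erasure variables, every vertex $v\in\mathcal V$ and every $t\ge 0$, there exists a time-like sequence of length $t$ ending at $v$ that has at least $t-n_v(t)$ erased steps.
   Context: Let $\mathcal G=(\mathcal V,\mathcal E)$ be a finite connected undirected simple graph with $N=|\mathcal V|$ vertices and maximum degree $\Delta$; $\mathcal N_v$ denotes the set of neighbours of $v$. Fix an erasure probability $p\in[0,1]$. Erasures are symmetric: for every undirected edge $e\in\mathcal E$ and every round $t\ge 1$ there is a random variable $S^e_t\in\{0,1\}$ with $P(S^e_t=1)=1-p$ ($S^e_t=1$ means the edge works in round $t$, $S^e_t=0$ means the packets in both directions on $e$ are erased in round $t$), and all these variables are mutually independent. The retransmission protocol for distributed consensus is described by integer state variables $n_{vu}(t)$, for every ordered pair $(v,u)$ with $u\in\mathcal N_v$ and every $t\ge 0$ (the index of the latest iterate of node $u$ available at node $v$ after round $t$), together with $n_v(t)=1+\min_{u\in\mathcal N_v} n_{vu}(t)$ (the number of iterations of the consensus update $x^v_{k+1}=x^v_k-\epsilon\sum_{u\in\mathcal N_v}(x^v_k-x^u_k)$ that node $v$ has completed after round $t$). Initially $n_{vu}(0)=-1$ for all such pairs (so $n_v(0)=0$), and for all $t\ge 0$ $$n_{vu}(t+1)=n_{vu}(t)+S^{\{u,v\}}_{t+1}\cdot\mathbf 1\{n_u(t)>n_{vu}(t)\}.$$ Node $u$ is said to transmit a ''wait'' to node $v$ in round $t+1$ iff $n_{vu}(t)=n_u(t)$. A time-like sequence of length $t$ ending at $v$ is a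 sequence of vertices $(w_t,w_{t-1},\dots,w_0)$ with $w_t=v$ such that for each $1\le\tau\le t$ either $w_\tau=w_{\tau-1}$ or $\{w_\tau,w_{\tau-1}\}\in\mathcal E$ (equivalently, a path in the ''trellis'' whose vertices are the copies $v_\tau$, $v\in\mathcal V$, $\tau\ge0$, and whose edges join $v_\tau$ and $u_{\tau-1}$ whenever $u=v$ or $\{u,v\}\in\mathcal E$). Its $\tau$-th step ($1\le\tau\le t$) is called erased if $w_\tau\ne w_{\tau-1}$ and $S^{\{w_\tau,w_{\tau-1}\}}_\tau=0$. *)

From HB Require Import structures.
From mathcomp Require Import all_boot all_order all_algebra.
Set Implicit Arguments. Unset Strict Implicit. Unset Printing Implicit Defensive.
Import Order.TTheory GRing.Theory Num.Theory.
Local Open Scope ring_scope.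

(* Erasure realization:
   S t u v : bool, S t u v = true means edge {u,v} works in round t
   (symmetry S t u v = S t v u is a hypothesis of the theorem). *)

(* minimum of f over the neighbours of u (only used when u has a neighbour;
   the seed of the fold is a neighbour, so the value is the true minimum) *)
Definition nbr_min (V : finType) (e : rel V) (f : V -> int) (u : V) : int :=
  match [pick w | e u w] with
  | Some w0 => \big[Order.min/f w0]_(w | e u w) f w
  | None => 0
  end.

Definition node_iter (V : finType) (e : rel V) (s : V -> V -> int) (u : V) : int :=
  1 + nbr_min e (s u) u.

(* state t v u = n_{vu}(t) *)
Fixpoint state (V : finType) (e : rel V) (S : nat -> V -> V -> bool) (t : nat)
  : V -> V -> int :=
  match t with
  | 0 => fun _ _ => -1
  | t'.+1 => fun v u =>
      let s := state e S t' in
      s v u + ((S t'.+1 u v && (s v u < node_iter e s u)) : nat)%:Z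
  end.

Definition n_node (V : finType) (e : rel V) (S : nat -> V -> V -> bool)
  (t : nat) (v : V) : int := node_iter e (state e S t) v.

Definition timelike (V : finType) (e : rel V) (t : nat) (v : V) (w : nat -> V) : Prop :=
  w t = v /\ (forall tau, (1 <= tau <= t)%N -> w tau = w tau.-1 \/ e (w tau) (w tau.-1)).

Definition n_erased (V : finType) (S : nat -> V -> V -> bool) (t : nat) (w : nat -> V) : nat :=
  (\sum_(1 <= tau < t.+1) ((w tau != w tau.-1) && ~~ S tau (w tau) (w tau.-1) : nat))%N.

From HB Require Import structures.
From mathcomp Require Import all_boot all_order all_algebra.
From mathcomp Require Import zify.
Import Order.TTheory GRing.Theory Num.Theory.
Local Open Scope ring_scope.
Set Implicit Arguments.
Unset Strict Implicit.

(* Say that [v] is reachable at time [t] with cost [k] if some time-like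
   sequence of length [t] ending at [v] has at least [k] erased steps.
   Reachability is monotone in [k], survives staying put for one round, and
   survives moving along an edge, at the price of one erasure if that edge
   fails in the new round.
   The heart of the proof is an invariant about edges: for every edge
   {v,u} and every [t], [v] is reachable with cost
   [t - 1 - min(n_vu(t), n_uv(t))].  It holds at [t = 0], and it is preserved
   by one round: if the edge is erased, both counters are frozen and we move
   across the erased edge; if it works, each counter [x] becomes at least
   [min(x + 1, n)] where [n] is the iteration number of the sender, and one of
   three extensions (staying on the old witness, or following the node
   witnesses of [u] or of [v]) pays off.  The node statement
   [t - n_v(t)] then follows by choosing the neighbour attaining the minimum
   in [n_v(t) = 1 + min_u n_vu(t)]; every vertex has a neighbour because the
   graph is connected with at least two vertices. *)

Section TimelikeSequences.
Variables (V : finType) (e : rel V) (S : nat -> V -> V -> bool).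

Definition reach (t : nat) (v : V) (k : int) : Prop :=
  exists w, timelike e t v w /\ k <= (n_erased S t w)%:Z.

Definition extend (w : nat -> V) (t : nat) (y : V) : nat -> V :=
  fun k => if k == t.+1 then y else w k.

Lemma extend_old (w : nat -> V) t y k : (k <= t)%N -> extend w t y k = w k.
Proof. by move=> le_kt; rewrite /extend ltn_eqF. Qed.

Lemma extend_new (w : nat -> V) t y : extend w t y t.+1 = y.
Proof. by rewrite /extend eqxx. Qed.

Lemma timelike_extend t x y w :
  timelike e t x w -> y = x \/ e y x -> timelike e t.+1 y (extend w t y).
Proof.
move=> [wt hw] hyx; split; first exact: extend_new.
move=> tau /andP[tau_ge1]; rewrite leq_eqVlt ltnS => /orP[/eqP->|le_tau].
  by rewrite extend_new /= extend_old // wt.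
rewrite !extend_old ?(leq_trans (leq_pred tau)) //.
by apply: hw; rewrite tau_ge1.
Qed.

Lemma n_erased_extend t x y w : w t = x ->
  n_erased S t.+1 (extend w t y) =
  (n_erased S t w + ((y != x) && ~~ S t.+1 y x))%N.
Proof.
move=> wt; rewrite /n_erased big_nat_recr //= extend_new extend_old // wt.
congr (_ + _)%N; apply: eq_big_nat => tau /andP[_ lt_tau].
by rewrite !extend_old // ?(leq_trans (leq_pred tau)) // -ltnS.
Qed.

Lemma reach0 v : reach 0 v 0.
Proof.
exists (fun=> v); split=> //; split=> // tau /andP[h1 h2].
by move: (leq_trans h1 h2).
Qed.

Lemma reach_le t v k k' : k' <= k -> reach t v k -> reach t v k'.
Proof. by move=> le_k [w [tw hw]]; exists w; split=> //; apply: le_trans hw. Qed.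

Lemma reach_step t u v k : v = u \/ e v u -> reach t u k ->
  reach t.+1 v (k + ((v != u) && ~~ S t.+1 v u : nat)%:Z).
Proof.
move=> hvu [w [tw hk]]; exists (extend w t v); split.
  exact: timelike_extend tw hvu.
by rewrite (n_erased_extend v tw.1) PoszD lerD2r.
Qed.

Lemma reach_stay t v k : reach t v k -> reach t.+1 v k.
Proof. by move=> /(reach_step (or_introl erefl)); rewrite eqxx addr0. Qed.

End TimelikeSequences.

Lemma nbr_min_attained (V : finType) (e : rel V) (f : V -> int) u w :
  e u w -> exists2 x, e u x & nbr_min e f u = f x.
Proof.
move=> euw; rewrite /nbr_min; case: pickP => [w0 euw0|/(_ w)]; last by rewrite euw.
apply: (big_ind (fun y => exists2 x, e u x & y = f x)) => //; first by exists w0.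
- by move=> _ _ [x ex ->] [y ey ->]; rewrite /Order.min; case: ifP => _; [exists x|exists y].
- by move=> x ex; exists x.
Qed.

Lemma counter_progress (x n : int) :
  Order.min (x + 1) n <= x + ((x < n)%R : nat)%:Z.
Proof. by case: (boolP (x < n)) => /=; rewrite ?(ltNge, negbK); lia. Qed.

Section Protocol.
Variables (V : finType) (e : rel V) (S : nat -> V -> V -> bool).
Hypotheses (e_sym : symmetric e) (e_irr : irreflexive e)
  (S_sym : forall t u v, S t u v = S t v u)
  (has_nbr : forall x, exists y, e x y).

Definition edge_bound (t : nat) (v u : V) : int :=
  t%:Z - 1 - Order.min (state e S t v u) (state e S t u v).

Definition edge_invariant (t : nat) : Prop :=
  forall v u, e v u -> reach e S t v (edge_bound t v u).

Lemma edge_bound_sym t v u : edge_bound t v u = edge_bound t u v.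
Proof. by rewrite /edge_bound minC. Qed.

Lemma node_reach t u : edge_invariant t ->
  reach e S t u (t%:Z - n_node e S t u).
Proof.
move=> inv_t; have [x eux] := has_nbr u.
have [y euy min_y] := nbr_min_attained (state e S t u) eux.
apply: reach_le (inv_t u y euy).
rewrite /n_node /node_iter min_y /edge_bound; lia.
Qed.

(* If the edge is erased, both counters are frozen and we cross it. *)
Lemma edge_invariant_erased t v u : e v u -> S t.+1 u v = false ->
  edge_invariant t -> reach e S t.+1 v (edge_bound t.+1 v u).
Proof.
move=> evu Sfail inv_t.
have vu : v != u by apply: contraTneq evu => ->; rewrite e_irr.
have euv : e u v by rewrite e_sym.
have := reach_step (or_intror evu) (inv_t u v euv).
rewrite vu (S_sym _ v u) Sfail edge_bound_sym /edge_bound /= Sfail /=.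
by apply: reach_le; rewrite !addr0; lia.
Qed.

(* If the edge works, the new minimum is at least [min(m + 1, n_u, n_v)]
   and one of three extensions realises the required bound. *)
Lemma edge_invariant_working t v u : e v u -> S t.+1 u v = true ->
  edge_invariant t -> reach e S t.+1 v (edge_bound t.+1 v u).
Proof.
move=> evu Swork inv_t.
set a := state e S t v u; set b := state e S t u v.
set nu := n_node e S t u; set nv := n_node e S t v.
have stay_edge := reach_stay (inv_t v u evu).
have from_u : reach e S t.+1 v (t%:Z - nu).
  have := reach_step (or_intror evu) (node_reach u inv_t).
  by rewrite -S_sym Swork andbF addr0.
have stay_v := reach_stay (node_reach v inv_t).
have progress_a := counter_progress a nu; have progress_b := counter_progress b nv.
rewrite /edge_bound /= Swork (S_sym _ v u) Swork /= -/a -/b.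
rewrite -[node_iter _ _ u]/nu -[node_iter _ _ v]/nv.
rewrite /edge_bound -/a -/b in stay_edge.
case: (leP (Order.min a b + 1) (Order.min nu nv)) => [le_m|lt_m].
  by apply: reach_le stay_edge; lia.
case: (leP nu nv) => [le_uv|lt_vu].
- by apply: reach_le from_u; lia.
- by apply: reach_le stay_v; lia.
Qed.

Lemma edge_invariant_all t : edge_invariant t.
Proof.
elim: t => [|t inv_t] v u evu.
  by apply: reach_le (reach0 e S v); rewrite /edge_bound /=.
case Suv: (S t.+1 u v).
- exact: edge_invariant_working.
- exact: edge_invariant_erased.
Qed.

End Protocol.

Lemma connected_has_neighbours (V : finType) (e : rel V) :
  (forall x y : V, connect e x y) -> (1 < #|V|)%N -> forall u, exists x, e u x.
Proof.
move=> e_conn hN u.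
have : (0 < #|predC1 u|)%N by rewrite cardC1; lia.
case/card_gt0P => x; rewrite !inE => xu.
case/connectP: (e_conn u x) => [[|y p]] /=; first by move=> _ E; rewrite E eqxx in xu.
by case/andP => euy _ _; exists y.
Qed.

Theorem lemma5 (V : finType) (e : rel V)
  (e_sym : symmetric e) (e_irr : irreflexive e)
  (e_conn : forall x y : V, connect e x y) (hN : (1 < #|V|)%N)
  (S : nat -> V -> V -> bool)
  (S_sym : forall t u v, S t u v = S t v u)
  (v : V) (t : nat) :
  exists w : nat -> V, timelike e t v w /\
    (t%:Z - n_node e S t v <= (n_erased S t w)%:Z).
Proof.
have hnb := connected_has_neighbours e_conn hN.
exact: (node_reach hnb v (edge_invariant_all e_sym e_irr S_sym hnb t)).
Qed.
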